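(* For any finite graph $G=(V,E)$ there exists a sequence of graphs $(G_n)_{n\in\mathbb{N}}$ with $G_0=G$ and $G_n$ a $2$-lift of $G_{n-1}$ for $n\ge 1$ (so $G_n$ is a $2^n$-lift of $G$, with covering map $\pi_n:G_n\to G$) such that for every $v\in V$ and every choice of $v_n\in\pi_n^{-1}(v)$, the rooted graphs $(G_n,v_n)$ converge to $(T(G),v)$ in $\mathcal{G}_\star$.
   Context: A $2$-lift of a loopless graph $G$ is a graph on $V\times\{0,1\}$ in which each edge $(u,v)$ of $G$ is replaced either by $((u,0),(v,0)),((u,1),(v,1))$ or by $((u,0),(v,1)),((u,1),(v,0))$; the covering map projects $(u,i)\mapsto u$. $(T(G),v)$ is the tree of finite non-backtracking walks in $G$ starting at $v$ (walks adjacent if one extends the other by one step), rooted at the empty walk. $\mathcal{G}_\star$ is the set of locally finite connected rooted graphs up to rooted isomorphism (a rooted graph $(H,o)$ being identified with the connected component of $o$), with the distance $1/(1+r)$ where $r=\sup\{h: [H,o]_h\equiv[H',o']_h\}$ and $[H,o]_h$ is the rooted subgraph induced by vertices within graph distance $h$ of $o$. *)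

From mathcomp Require Import all_boot.
Set Implicit Arguments. Unset Strict Implicit. Unset Printing Implicit Defensive.

Inductive walkn (A : Type) (adj : A -> A -> bool) : A -> A -> nat -> Prop :=
| walkn0 x : walkn adj x x 0
| walknS x y z k : walkn adj x y k -> adj y z -> walkn adj x z k.+1.

Definition inball (A : Type) (adj : A -> A -> bool) (o : A) (h : nat) (y : A) : Prop :=
  exists k, k <= h /\ walkn adj o y k.

Definition ball_iso (A B : Type) (adjA : A -> A -> bool) (a : A)
    (adjB : B -> B -> bool) (b : B) (h : nat) : Prop :=
  exists (f : A -> B) (g : B -> A),
    f a = b /\
    (forall x, inball adjA a h x -> inball adjB b h (f x) /\ g (f x) = x) /\
    (forall y, inball adjB b h y -> inball adjA a h (g y) /\ f (g y) = y) /\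
    (forall x y, inball adjA a h x -> inball adjA a h y ->
       (adjA x y <-> adjB (f x) (f y))).

(* convergence (H_n, o_n) --> (H, o) in G_star: distance 1/(1+r_n) -> 0,
   i.e. for every radius h the h-balls are eventually rooted isomorphic *)
Definition local_conv (A : nat -> Type) (adjA : forall n, A n -> A n -> bool)
    (o : forall n, A n) (B : Type) (adjB : B -> B -> bool) (b : B) : Prop :=
  forall h, exists N, forall n, N <= n -> ball_iso (adjA n) (o n) adjB b h.

Definition simple_graph (V : finType) (e : rel V) : Prop :=
  symmetric e /\ irreflexive e.

(* vertex set of a 2^n-lift : V x {0,1} x ... x {0,1} *)
Fixpoint LV (V : Type) (n : nat) : Type :=
  match n with 0 => V | n'.+1 => (LV V n' * bool)%type end.

Fixpoint proj (V : Type) (n : nat) : LV V n -> V :=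
  match n return LV V n -> V with
  | 0 => fun x => x
  | n'.+1 => fun x => proj x.1
  end.

(* H' is a 2-lift of H: each edge uv receives a choice s u v (symmetric),
   false = parallel ((u,i),(v,i)), true = crossed ((u,i),(v,1-i)); no other edges *)
Definition is_2lift (T : Type) (H : T -> T -> bool) (H' : (T * bool) -> (T * bool) -> bool)
  : Prop :=
  exists s : T -> T -> bool, (forall u v, s u v = s v u) /\
    forall u v i j, H' (u, i) (v, j) = H u v && ((i != j) == s u v).

(* a walk v, x1, ..., xk is encoded by the list [:: x1; ...; xk] *)
Fixpoint nonbacktrack (V : eqType) (s : seq V) : bool :=
  match s with
  | a :: ((_ :: c :: _) as t) => (a != c) && nonbacktrack t
  | _ => true
  end.

Definition nbwalk (V : finType) (e : rel V) (v : V) (w : seq V) : bool :=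
  path e v w && nonbacktrack (v :: w).

Definition tree_adj (V : finType) (e : rel V) (v : V) (w1 w2 : seq V) : bool :=
  nbwalk e v w1 && nbwalk e v w2 &&
  ((size w2 == (size w1).+1) && (w1 == take (size w1) w2)
   || (size w1 == (size w2).+1) && (w2 == take (size w2) w1)).

From mathcomp Require Import all_boot.
From Stdlib Require Import Classical ClassicalEpsilon Lia.
From mathcomp Require Import zify.
Set Implicit Arguments. Unset Strict Implicit. Unset Printing Implicit Defensive.

(* Let L be the length of the shortest closed non-backtracking walks of a
   finite graph.  Such a walk lifts along a signed 2-lift to two closed walks
   or to none, according to the parity of its crossed edges, and its first
   edge is traversed only once, so it lifts for exactly half of the signings;
   hence some signing has fewer closed walks of length L in the lift, while no
   shorter ones appear.  Iterating, for every L the 2^n-lifts eventually have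
   no closed non-backtracking walk of length at most L.  In a covering without
   such walks of length at most 2h+2, lifting non-backtracking walks of length
   at most h from v to v_n is an isomorphism of h-balls from T(G) onto G_n. *)

(* The turn at the base point [f 0 = f m] is not constrained: these are closed
   non-backtracking walks, not cycles of the non-backtracking operator. *)
Definition nbcycle (X : Type) (H : X -> X -> bool) (m : nat) (f : nat -> X) : Prop :=
  [/\ f 0 = f m, forall i, i < m -> H (f i) (f i.+1)
    & forall i, i.+2 <= m -> f i <> f i.+2].

Definition nbcycle_free (X : Type) (H : X -> X -> bool) (L : nat) : Prop :=
  forall m f, 0 < m -> m <= L -> ~ nbcycle H m f.

Lemma nonbacktrackP (T : eqType) (x0 : T) (s : seq T) :
  nonbacktrack s <-> (forall i, i.+2 < size s -> nth x0 s i <> nth x0 s i.+2).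
Proof.
elim: s => [|a t IH]; first by split.
case: t IH => [|b [|c r]] IH; try by split => // _ [|[|i]].
rewrite [nonbacktrack _]/=; split.
- move=> /andP[/negP ac nb] [|i] /=; first by move=> _ /eqP.
  by rewrite ltnS; apply: (proj1 IH nb).
- move=> nbs; apply/andP; split; first by apply/eqP => ac; apply: (nbs 0).
  by apply/IH => i; apply: (nbs i.+1).
Qed.

Lemma nonbacktrack_rcons2 (T : eqType) (x0 : T) (s : seq T) y z :
  nonbacktrack (rcons (rcons s y) z) <->
  nonbacktrack (rcons s y) /\ (0 < size s -> last x0 s <> z).
Proof.
rewrite !(nonbacktrackP x0) !size_rcons.
have nthE i : i <= size s -> nth x0 (rcons (rcons s y) z) i = nth x0 (rcons s y) i.
  by move=> le_i; rewrite nth_rcons size_rcons ltnS le_i.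
have nth_last_s : 0 < size s -> nth x0 (rcons s y) (size s).-1 = last x0 s.
  by move=> s_gt0; rewrite nth_rcons prednK // leqnn -nth_last.
have nth_z : nth x0 (rcons (rcons s y) z) (size s).+1 = z.
  by rewrite nth_rcons size_rcons ltnn eqxx.
split.
- move=> nbs; split=> [i lt_i|s_gt0].
    by have := nbs i; rewrite !nthE; [apply; lia | lia | lia].
  have := nbs (size s).-1; rewrite nthE ?leq_pred // nth_last_s // prednK // nth_z.
  by apply; lia.
- move=> [nbs nlast] i lt_i.
  have [lt_i2|ge_i2] := ltnP i.+2 (size s).+1.
    by rewrite !nthE; [apply: nbs | lia | lia].
  have s_gt0 : 0 < size s by lia.
  have -> : i = (size s).-1 by lia.
  by rewrite nthE ?leq_pred // nth_last_s // prednK // nth_z; apply: nlast.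
Qed.

Section TreeOfWalks.
Variables (V : finType) (e : rel V).

Lemma nbwalkP v w : nbwalk e v w <->
  (forall i, i < size w -> e (nth v (v :: w) i) (nth v (v :: w) i.+1)) /\
  (forall i, i.+2 <= size w -> nth v (v :: w) i <> nth v (v :: w) i.+2).
Proof.
rewrite /nbwalk; split.
- by move=> /andP[/(pathP v) P /(nonbacktrackP v) N].
- by move=> [P N]; apply/andP; split; [apply/(pathP v) | apply/(nonbacktrackP v)].
Qed.

Lemma nbwalk_take v w k : nbwalk e v w -> nbwalk e v (take k w).
Proof.
move=> /nbwalkP[P N]; apply/nbwalkP.
have size_tk : size (take k w) <= size w by rewrite size_take; case: ltnP => //; lia.
have nthE i : i <= size (take k w) -> nth v (v :: take k w) i = nth v (v :: w) i.
  move=> le_i; rewrite -/(take k.+1 (v :: w)) nth_take //.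
  by move: le_i; rewrite size_take; case: ltnP; lia.
by split=> i lt_i; rewrite !nthE; try lia; [apply: P | apply: N]; lia.
Qed.

Lemma nbwalk_belast v w a : nbwalk e v (rcons w a) -> nbwalk e v w.
Proof. by move=> /(nbwalk_take (size w)); rewrite -cats1 take_size_cat. Qed.

Lemma tree_adj_rcons v w a :
  nbwalk e v (rcons w a) -> tree_adj e v w (rcons w a).
Proof.
move=> nbwa; rewrite /tree_adj nbwa (nbwalk_belast nbwa) size_rcons eqxx /=.
by rewrite -cats1 take_size_cat ?eqxx.
Qed.

Lemma tree_adjC v w1 w2 : tree_adj e v w1 w2 = tree_adj e v w2 w1.
Proof. by rewrite /tree_adj [nbwalk e v w1 && _]andbC orbC. Qed.

Lemma tree_adjP v w1 w2 : tree_adj e v w1 w2 ->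
  [/\ nbwalk e v w1, nbwalk e v w2 &
      (exists a, w2 = rcons w1 a) \/ (exists a, w1 = rcons w2 a)].
Proof.
have extend (u w : seq V) : size w = (size u).+1 -> u = take (size u) w ->
    exists a, w = rcons u a.
  move=> size_w uE; exists (nth v w (size u)).
  by rewrite {1}uE -take_nth ?size_w // -size_w take_size.
move=> /andP[/andP[nb1 nb2]] /orP[] /andP[/eqP size_w /eqP wE]; split=> //.
  by left; apply: extend.
by right; apply: extend.
Qed.

Lemma tree_walk v w : nbwalk e v w -> walkn (tree_adj e v) [::] w (size w).
Proof.
elim/last_ind: w => [|w a IH] nbwa; first by constructor.
by rewrite size_rcons; apply: walknS (IH (nbwalk_belast nbwa)) (tree_adj_rcons nbwa).
Qed.

Lemma tree_ball v h y :
  inball (tree_adj e v) [::] h y -> nbwalk e v y /\ size y <= h.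
Proof.
move=> [k [le_k W]].
suff: forall x y k, walkn (tree_adj e v) x y k -> x = [::] -> nbwalk e v y /\ size y <= k.
  by move=> /(_ _ _ _ W erefl)[? ?]; split => //; lia.
move=> {W} x {}y {le_k}k; elim=> [x0 -> //|x0 y0 z k0 _ IH adj_yz x0E].
have [_ size_y] := IH x0E.
by move: adj_yz => /andP[/andP[_ nbz]] /orP[] /andP[/eqP size_z _]; split => //; lia.
Qed.

End TreeOfWalks.

Record covering (V : finType) (e : rel V) (X : Type) (H : X -> X -> bool)
    (p : X -> V) (lst : X -> V -> X) : Prop := Covering {
  cover_edge : forall x y, H x y -> e (p x) (p y);
  cover_step : forall x u, e (p x) u -> H x (lst x u) /\ p (lst x u) = u;
  cover_unique : forall x y z, H x y -> H x z -> p y = p z -> y = z;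
  cover_sym : forall x y, H x y = H y x }.

Section Covering.
Variables (V : finType) (e : rel V) (X : Type) (H : X -> X -> bool).
Variables (p : X -> V) (lst : X -> V -> X) (o : X).
Hypothesis cov : covering e H p lst.
Let v := p o.

Definition lift_end (w : seq V) := foldl lst o w.

Lemma lift_end_rcons w a : lift_end (rcons w a) = lst (lift_end w) a.
Proof. by rewrite /lift_end foldl_rcons. Qed.

Lemma lift_end_proj w : path e v w -> p (lift_end w) = last v w.
Proof.
elim/last_ind: w => [//|w a IH]; rewrite rcons_path => /andP[Pw ea].
by rewrite lift_end_rcons last_rcons; apply: (cover_step cov _).2; rewrite IH.
Qed.

Lemma lift_end_adj w a : path e v (rcons w a) -> H (lift_end w) (lift_end (rcons w a)).
Proof.
rewrite rcons_path => /andP[Pw ea].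
by rewrite lift_end_rcons; apply: (cover_step cov _).1; rewrite lift_end_proj.
Qed.

Lemma lift_end_walk w : path e v w -> walkn H o (lift_end w) (size w).
Proof.
elim/last_ind: w => [|w a IH] Pwa; first by constructor.
rewrite size_rcons; apply: walknS (IH _) (lift_end_adj Pwa).
by move: Pwa; rewrite rcons_path => /andP[].
Qed.

Lemma lift_end_take_proj w i :
  path e v w -> i <= size w -> p (lift_end (take i w)) = nth v (v :: w) i.
Proof.
move=> Pw le_i; rewrite lift_end_proj; last first.
  by rewrite -(cat_take_drop i w) cat_path in Pw; case/andP: Pw.
rewrite (last_nth v) size_take; case: ltnP => lt_i.
  by rewrite -/(take i.+1 (v :: w)) nth_take.
have -> : i = size w by lia.
by rewrite take_size.
Qed.

Lemma lift_end_take_adj w i :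
  path e v w -> i < size w -> H (lift_end (take i w)) (lift_end (take i.+1 w)).
Proof.
move=> Pw lt_i; have Pt : path e v (take i.+1 w).
  by rewrite -(cat_take_drop i.+1 w) cat_path in Pw; case/andP: Pw.
by rewrite (take_nth v lt_i) in Pt *; apply: lift_end_adj.
Qed.

Lemma lift_end_nbcycle w :
  nbwalk e v w -> lift_end w = o -> nbcycle H (size w) (fun i => lift_end (take i w)).
Proof.
move=> nbw wo; have Pw : path e v w by case/andP: nbw.
have /nbwalkP[_ N] := nbw.
split=> [|i lt_i|i lt_i E]; first by rewrite take0 take_size wo.
  exact: lift_end_take_adj.
by apply: (N i lt_i); rewrite -!lift_end_take_proj // ?E //; lia.
Qed.

(* Two non-backtracking walks with the same lifted end but different lifted
   penultimate points close up, walking one forward and the other backward. *)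
Lemma lift_end_merge_nbcycle a1 b1 x :
  nbwalk e v (rcons a1 x) -> nbwalk e v (rcons b1 x) ->
  lift_end (rcons a1 x) = lift_end (rcons b1 x) -> lift_end a1 <> lift_end b1 ->
  exists f, nbcycle H (size (rcons a1 x) + size (rcons b1 x)) f.
Proof.
set a := rcons a1 x; set b := rcons b1 x => nba nbb Eab Ne.
have Pa : path e v a by case/andP: nba.
have Pb : path e v b by case/andP: nbb.
have /nbwalkP[_ NA] := nba; have /nbwalkP[_ NB] := nbb.
have size_a : size a = (size a1).+1 by rewrite size_rcons.
have size_b : size b = (size b1).+1 by rewrite size_rcons.
set m := size a + size b.
pose f i := if i < size a then lift_end (take i a) else lift_end (take (m - i) b).
have fa i : i <= size a -> f i = lift_end (take i a).
  rewrite /f; case: ltnP => // ge_i le_i.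
  have -> : m - i = size b by rewrite /m; lia.
  have -> : i = size a by lia.
  by rewrite !take_size Eab.
have fb i : size a <= i -> f i = lift_end (take (m - i) b).
  by rewrite /f; case: ltnP => //; lia.
have take_a1 : take (size a1) a = a1 by rewrite /a -cats1 take_size_cat.
have take_b1 : take (size b1) b = b1 by rewrite /b -cats1 take_size_cat.
exists f; split=> [|i lt_i|i lt_i].
- by rewrite fa // fb /m ?subnn ?take0 //; lia.
- have [lt_ia|ge_ia] := ltnP i (size a).
    by rewrite !fa //; [apply: lift_end_take_adj | lia].
  rewrite !fb //; last lia.
  have -> : m - i = (m - i.+1).+1 by rewrite /m; lia.
  by rewrite (cover_sym cov); apply: lift_end_take_adj => //; rewrite /m in lt_i *; lia.
- have [le_ia|gt_ia] := leqP i.+2 (size a).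
    rewrite !fa //; last lia.
    by move=> E; apply: (NA i le_ia); rewrite -!lift_end_take_proj // ?E //; lia.
  have [le_ai|lt_ai] := leqP (size a) i.
    rewrite !fb //; last lia.
    have -> : m - i = (m - i.+2).+2 by rewrite /m in lt_i *; lia.
    move=> E; apply: (NB (m - i.+2)); first by rewrite /m in lt_i *; lia.
    by rewrite -!lift_end_take_proj // ?E //; rewrite /m in lt_i *; lia.
  have i_a1 : i = size a1 by lia.
  rewrite fa; last lia.
  rewrite fb; last lia.
  have -> : m - i.+2 = size b1 by rewrite /m i_a1; lia.
  by rewrite i_a1 take_a1 take_b1.
Qed.

Lemma lift_end_step a z : nbwalk e v a -> H (lift_end a) z ->
  (exists a1 c, a = rcons a1 c /\ lift_end a1 = z) \/
  (nbwalk e v (rcons a (p z)) /\ lift_end (rcons a (p z)) = z).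
Proof.
move=> nba Hz; have Pa : path e v a by case/andP: nba.
have Ez : lift_end (rcons a (p z)) = z.
  rewrite lift_end_rcons; have [A B] := cover_step cov (cover_edge cov Hz).
  exact: (cover_unique cov A Hz B).
case/lastP: a nba Pa Hz Ez => [|a1 c] nba Pa Hz Ez.
  by right; split => //; rewrite /nbwalk /= !andbT (cover_edge cov Hz).
have [E|NE] := classic (lift_end a1 = z); first by left; exists a1, c.
right; split => //.
have Pa1 : path e v a1 by move: Pa; rewrite rcons_path => /andP[].
rewrite /nbwalk rcons_path Pa /=; apply/andP; split.
  by have := cover_edge cov Hz; rewrite lift_end_proj // last_rcons.
apply/(nonbacktrack_rcons2 v (v :: a1) c (p z)); split; first by case/andP: nba.
move=> _ /= Elast; apply: NE.
have A1 : H (lift_end (rcons a1 c)) (lift_end a1).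
  by rewrite (cover_sym cov); apply: lift_end_adj.
by apply: (cover_unique cov A1 Hz); rewrite lift_end_proj.
Qed.

Lemma lift_end_inj L : nbcycle_free H L -> forall a b,
  nbwalk e v a -> nbwalk e v b -> size a + size b <= L ->
  lift_end a = lift_end b -> a = b.
Proof.
move=> CF a b; move: {2}(size a + size b) (leqnn (size a + size b)) => N.
elim: N a b => [|N IH] a b le_N nba nbb le_L Eab.
  by case: a b le_N {nba nbb le_L Eab} => [|? ?] [|? ?].
case/lastP: a le_N nba le_L Eab => [|a1 x]; case/lastP: b nbb => [|b1 y] //.
- move=> nbb _ _ le_L Eab; have Cf := lift_end_nbcycle nbb (esym Eab).
  by case: (CF _ _ _ le_L Cf); rewrite size_rcons.
- move=> _ _ nba le_L Eab; have Cf := lift_end_nbcycle nba Eab.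
  by case: (CF _ _ _ _ Cf); [rewrite size_rcons | rewrite addn0 in le_L].
move=> nbb le_N nba le_L Eab.
have Pa : path e v (rcons a1 x) by case/andP: nba.
have Pb : path e v (rcons b1 y) by case/andP: nbb.
have Exy : x = y by have := lift_end_proj Pa; rewrite Eab lift_end_proj // !last_rcons.
subst y.
have [E1|NE] := classic (lift_end a1 = lift_end b1).
  rewrite (IH a1 b1) ?(nbwalk_belast nba) ?(nbwalk_belast nbb) //;
    by move: le_N le_L; rewrite !size_rcons; lia.
have [f Cf] := lift_end_merge_nbcycle nba nbb Eab NE.
by case: (CF _ f _ le_L Cf); rewrite size_rcons.
Qed.

Lemma walkn_reduce k y : walkn H o y k ->
  exists w, [/\ nbwalk e v w, size w <= k & lift_end w = y].
Proof.
suff: forall x y k, walkn H x y k -> x = o ->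
    exists w, [/\ nbwalk e v w, size w <= k & lift_end w = y].
  by move=> reduce W; apply: reduce W erefl.
move=> x {}y {}k; elim=> [x0 ->|x0 y0 z k0 _ IH adj_yz x0E]; first by exists [::].
have [w [nbw size_w Ew]] := IH x0E; rewrite -Ew in adj_yz.
case: (lift_end_step nbw adj_yz) => [[a1 [c [wE E1]]]|[nbw' Ez]].
  exists a1; split=> //; first by rewrite wE in nbw; apply: nbwalk_belast nbw.
  by move: size_w; rewrite wE size_rcons; lia.
by exists (rcons w (p z)); rewrite size_rcons.
Qed.

Section Ball.
Variable h : nat.
Hypothesis short_cycle_free : nbcycle_free H (h + h).+2.

Lemma short_lift_end_inj a b : nbwalk e v a -> nbwalk e v b ->
  size a <= h.+1 -> size b <= h.+1 -> lift_end a = lift_end b -> a = b.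
Proof.
move=> nba nbb le_a le_b; apply: lift_end_inj short_cycle_free _ _ nba nbb _.
by rewrite -addnS -addSn leq_add.
Qed.

Definition tree_point (x : X) : seq V :=
  epsilon (inhabits [::]) (fun w => [/\ nbwalk e v w, size w <= h & lift_end w = x]).

Lemma tree_pointP x : inball H o h x ->
  [/\ nbwalk e v (tree_point x), size (tree_point x) <= h & lift_end (tree_point x) = x].
Proof.
move=> [k [le_k W]]; have [w [nbw size_w Ew]] := walkn_reduce W.
have ex : exists w, [/\ nbwalk e v w, size w <= h & lift_end w = x].
  by exists w; split=> //; apply: leq_trans le_k.
exact: epsilon_spec ex.
Qed.

Lemma lift_end_inball w : nbwalk e v w -> size w <= h -> inball H o h (lift_end w).
Proof. by case/andP=> Pw _ size_w; exists (size w); split; last apply: lift_end_walk. Qed.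

Lemma tree_point_lift_end w : nbwalk e v w -> size w <= h -> tree_point (lift_end w) = w.
Proof.
move=> nbw size_w; have [nbt size_t Et] := tree_pointP (lift_end_inball nbw size_w).
by apply: short_lift_end_inj => //; apply: leqW.
Qed.

Lemma tree_point_adj x y : inball H o h x -> inball H o h y ->
  H x y -> tree_adj e v (tree_point x) (tree_point y).
Proof.
move=> /tree_pointP[nbx size_x Ex] /tree_pointP[nby size_y Ey]; rewrite -{1}Ex.
case/(lift_end_step nbx) => [[a1 [c [xE E1]]]|[nbx' Ey']].
  have nba1 : nbwalk e v a1 by rewrite xE in nbx; apply: nbwalk_belast nbx.
  have <- : a1 = tree_point y.
    apply: short_lift_end_inj; rewrite ?Ey //; try exact: leqW.
    by move: size_x; rewrite xE size_rcons; lia.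
  by rewrite xE tree_adjC; apply: tree_adj_rcons; rewrite -xE.
have <- : rcons (tree_point x) (p y) = tree_point y.
  by apply: short_lift_end_inj; rewrite ?Ey ?size_rcons //; apply: leqW.
exact: tree_adj_rcons.
Qed.

Lemma adj_tree_point x y : inball H o h x -> inball H o h y ->
  tree_adj e v (tree_point x) (tree_point y) -> H x y.
Proof.
move=> /tree_pointP[_ _ Ex] /tree_pointP[_ _ Ey] /tree_adjP[nbx nby adj].
rewrite -Ex -Ey; case: adj => [[a yE]|[a xE]].
  by rewrite yE; apply: lift_end_adj; rewrite -yE; case/andP: nby.
by rewrite xE (cover_sym cov); apply: lift_end_adj; rewrite -xE; case/andP: nbx.
Qed.

Lemma covering_ball_iso : ball_iso H o (tree_adj e v) [::] h.
Proof.
exists tree_point, lift_end; split; last split; last split.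
- by rewrite -[o]/(lift_end [::]) tree_point_lift_end.
- move=> x Bx; have [nbx size_x Ex] := tree_pointP Bx; split=> //.
  by exists (size (tree_point x)); split; last apply: tree_walk.
- move=> w Bw; have [nbw size_w] := tree_ball Bw.
  by split; [apply: lift_end_inball | apply: tree_point_lift_end].
- by move=> x y Bx By; split; [apply: tree_point_adj | apply: adj_tree_point].
Qed.

End Ball.
End Covering.

Definition lift2 (X : Type) (H s : X -> X -> bool) : X * bool -> X * bool -> bool :=
  fun x y => H x.1 y.1 && ((x.2 != y.2) == s x.1 y.1).

Definition parity (X : Type) (s : X -> X -> bool) L (f : nat -> X) : bool :=
  \big[addb/false]_(0 <= i < L) s (f i) (f i.+1).

Lemma big_addb_telescope (b : nat -> bool) L :
  \big[addb/false]_(0 <= i < L) (b i (+) b i.+1) = b 0 (+) b L.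
Proof.
elim: L => [|L IH]; first by rewrite big_geq // addbb.
by rewrite big_nat_recr //= IH -addbA (addbA (b L)) addbb.
Qed.

Section Lift2.
Variables (X : Type) (H s : X -> X -> bool).
Hypothesis s_sym : forall u v, s u v = s v u.

Lemma lift2_is_2lift : is_2lift H (lift2 H s).
Proof. by exists s. Qed.

Lemma lift2_bit x y : lift2 H s x y -> y.2 = x.2 (+) s x.1 y.1.
Proof. by case/andP=> _; case: x.2; case: y.2; case: (s _ _). Qed.

Lemma nbcycle_proj_lift2 L f :
  nbcycle (lift2 H s) L f -> nbcycle H L (fun i => (f i).1).
Proof.
move=> [f0 adj nb]; split=> [|i lt_i|i lt_i E]; first by rewrite f0.
  by case/andP: (adj i lt_i).
apply: (nb i lt_i); have b1 := lift2_bit (adj i (ltnW lt_i)).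
have := lift2_bit (adj i.+1 lt_i); rewrite b1 s_sym -E -addbA addbb addbF.
by case: (f i) (f i.+2) E => [? ?] [? ?] /= -> ->.
Qed.

Lemma lift2_nbcycle_free L : nbcycle_free H L -> nbcycle_free (lift2 H s) L.
Proof. by move=> CF m f m_gt0 le_m /nbcycle_proj_lift2; apply: CF. Qed.

(* The bit changes exactly along the crossed edges, and returns to its start. *)
Lemma parity_proj_lift2 L f :
  nbcycle (lift2 H s) L f -> parity s L (fun i => (f i).1) = false.
Proof.
move=> [f0 adj _].
rewrite /parity (@eq_big_nat _ _ _ 0 L _ (fun i => (f i).2 (+) (f i.+1).2)).
  by rewrite big_addb_telescope f0 addbb.
by move=> i /andP[_ lt_i]; rewrite (lift2_bit (adj i lt_i)) addbA addbb.
Qed.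

Lemma lift2_covering (V : finType) (e : rel V) (p : X -> V) (lst : X -> V -> X) :
  covering e H p lst ->
  covering e (lift2 H s) (fun x => p x.1) (fun x u => (lst x.1 u, x.2 (+) s x.1 (lst x.1 u))).
Proof.
move=> cov; split.
- by move=> x y /andP[A _]; apply: (cover_edge cov).
- move=> x u E; have [A B] := cover_step cov E; split => //.
  by rewrite /lift2 /= A /=; case: (x.2); case: (s _ _).
- move=> x y z xy xz Ep; have E1 := cover_unique cov (andP xy).1 (andP xz).1 Ep.
  move: (lift2_bit xy) (lift2_bit xz); rewrite E1.
  by case: y z E1 {xy xz Ep} => [? ?] [? ?] /= -> -> ->.
- by move=> x y; rewrite /lift2 (cover_sym cov) (s_sym x.1) [x.2 == _]eq_sym.
Qed.

End Lift2.

Section Counting.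
Variables (T : finType) (H : rel T).

Definition fval L (F : {ffun 'I_L.+1 -> T}) (k : nat) : T := F (inord k).

Lemma fval_ffun L (f : nat -> T) i : i <= L -> fval [ffun j : 'I_L.+1 => f j] i = f i.
Proof. by move=> le_i; rewrite /fval ffunE inordK. Qed.

Definition nbcycleb L (F : {ffun 'I_L.+1 -> T}) : bool :=
  [&& fval F 0 == fval F L, all (fun i => H (fval F i) (fval F i.+1)) (iota 0 L) &
      all (fun i => fval F i != fval F i.+2) (iota 0 L.-1)].

Lemma nbcycleP L (F : {ffun 'I_L.+1 -> T}) : reflect (nbcycle H L (fval F)) (nbcycleb F).
Proof.
apply: (iffP and3P) => [[/eqP f0 /allP adj /allP nb]|[f0 adj nb]].
  split=> // i lt_i; first by apply: adj; rewrite mem_iota.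
  by apply/eqP; apply: nb; rewrite mem_iota; lia.
split; first exact/eqP.
  by apply/allP => i; rewrite mem_iota => /andP[_ lt_i]; apply: adj.
by apply/allP => i; rewrite mem_iota => /andP[_ lt_i]; apply/eqP; apply: nb; lia.
Qed.

Definition ncycles L := #|[set F : {ffun 'I_L.+1 -> T} | nbcycleb F]|.

Lemma ncycles_gt0 L : 0 < ncycles L <-> exists f, nbcycle H L f.
Proof.
rewrite card_gt0; split=> [/set0Pn[F]|[f [f0 adj nb]]].
  by rewrite inE => /nbcycleP; exists (fval F).
apply/set0Pn; exists [ffun j : 'I_L.+1 => f j]; rewrite inE; apply/nbcycleP.
split=> [|i lt_i|i lt_i]; rewrite !fval_ffun //; try lia.
- exact: adj.
- exact: nb.
Qed.

End Counting.

(* Each cycle of the lift is determined by its projection and its starting bit. *)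
Lemma ncycles_lift2_le (T : finType) (H : rel T) (s : T -> T -> bool) L :
  (forall u v, s u v = s v u) ->
  ncycles (lift2 H s) L <=
  2 * #|[set F : {ffun 'I_L.+1 -> T} | nbcycleb H F && ~~ parity s L (fval F)]|.
Proof.
move=> s_sym.
set B := [set F : {ffun 'I_L.+1 -> T} | nbcycleb H F && ~~ parity s L (fval F)].
pose Phi (F : {ffun 'I_L.+1 -> T * bool}) := ([ffun i => (F i).1], (F ord0).2).
have fval_proj (F : {ffun 'I_L.+1 -> T * bool}) k :
    fval [ffun i => (F i).1] k = (fval F k).1 by rewrite /fval ffunE.
rewrite /ncycles -(card_in_imset (f := Phi)).
  apply: leq_trans (subset_leq_card (_ : _ \subset setX B [set: bool])) _.
    apply/subsetP => _ /imsetP[F + ->]; rewrite !inE andbT => /nbcycleP CF.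
    apply/andP; split.
      apply/nbcycleP; have [f0 adj nb] := nbcycle_proj_lift2 s_sym CF.
      by split=> [|i lt_i|i lt_i]; rewrite !fval_proj; [ | apply: adj | apply: nb].
    suff -> : parity s L (fval [ffun i => (F i).1]) = parity s L (fun i => (fval F i).1).
      by rewrite (parity_proj_lift2 CF).
    by apply: eq_bigr => i _; rewrite !fval_proj.
  by rewrite cardsX cardsT card_bool mulnC.
move=> F1 F2; rewrite !inE => /nbcycleP[_ adj1 _] /nbcycleP[_ adj2 _] [E1 E2].
have E1i i : (F1 i).1 = (F2 i).1.
  by have := congr1 (fun g : {ffun 'I_L.+1 -> T} => g i) E1; rewrite /= !ffunE.
have Eb k : k <= L -> (fval F1 k).2 = (fval F2 k).2.
  elim: k => [|k IH] le_k.
    by rewrite /fval (_ : inord 0 = ord0) //; apply: val_inj; rewrite /= inordK.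
  rewrite (lift2_bit (adj1 k le_k)) (lift2_bit (adj2 k le_k)) IH; last lia.
  by rewrite /fval !E1i.
apply/ffunP => i; have := Eb i (leq_ord i); rewrite /fval inord_val.
by case: (F1 i) (F2 i) (E1i i) => [? ?] [? ?] /= -> ->.
Qed.

Lemma exists_lt_of_sum (I : finType) (a : I -> nat) c i0 :
  \sum_i a i = #|I| * c -> c < a i0 -> exists i, a i < c.
Proof.
move=> sum_a lt_c; case: (pickP (fun i => a i < c)) => [i lt_i|ge_c]; first by exists i.
have le_rest : \sum_(i | i != i0) c <= \sum_(i | i != i0) a i.
  by apply: leq_sum => i _; move/negbT: (ge_c i); rewrite -leqNgt.
have := sum_nat_const I c; rewrite cardT -cardE (bigD1 i0) //= => sumc.
by move: sum_a; rewrite (bigD1 i0) //= -sumc; lia.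
Qed.

Lemma sum_nat_bool (I : finType) (P : pred I) : \sum_i (P i : nat) = #|[set i | P i]|.
Proof. by rewrite -sum1dep_card [RHS]big_mkcond; apply: eq_bigr => i _; case: (P i). Qed.

Section Signings.
Variable T : finType.

(* Signings are indexed by ordered pairs; ordering each pair by [enum_rank]
   makes them symmetric. *)
Definition upair (u v : T) : T * T :=
  if enum_rank u <= enum_rank v then (u, v) else (v, u).

Lemma upairC (u v : T) : upair u v = upair v u.
Proof.
rewrite /upair; case: leqP => uv; case: leqP => vu //; try lia.
have /enum_rank_inj -> // : enum_rank u = enum_rank v.
by apply: val_inj; apply/eqP; rewrite eqn_leq uv vu.
Qed.

Lemma upair_inj (a b c d : T) : upair a b = upair c d -> (a = c /\ b = d) \/ (a = d /\ b = c).
Proof. by rewrite /upair; case: ifP; case: ifP => _ _ [-> ->]; auto. Qed.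

Definition sym_sign (t : {ffun T * T -> bool}) (u v : T) : bool := t (upair u v).

Lemma sym_signC t u v : sym_sign t u v = sym_sign t v u.
Proof. by rewrite /sym_sign upairC. Qed.

Variable H : rel T.

Lemma nbcycle_distinct L f : nbcycle H L f -> nbcycle_free H L.-1 ->
  forall i j, i < j <= L -> 0 < i \/ j < L -> f i <> f j.
Proof.
move=> [f0 adj nb] CF i j /andP[lt_ij le_jL] inner E.
apply: (CF (j - i) (fun k => f (i + k))); try lia.
split=> [|k lt_k|k lt_k]; first by rewrite addn0 subnKC ?E //; lia.
  by rewrite addnS; apply: adj; lia.
by rewrite !addnS; apply: nb; lia.
Qed.

(* On a shortest cycle the first edge is traversed only once, so flipping its
   sign flips the parity of the cycle. *)
Lemma nbcycle_first_edge_once L f : nbcycle H L f -> nbcycle_free H L.-1 ->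
  forall i, 0 < i < L -> upair (f i) (f i.+1) <> upair (f 0) (f 1).
Proof.
move=> C CF i /andP[i_gt0 lt_iL] /upair_inj[[A B]|[A B]].
  by apply: (nbcycle_distinct C CF (i := 0) (j := i)); [lia | right; lia | rewrite A].
have [lt_i1L|ge_i1L] := ltnP i.+1 L.
  by apply: (nbcycle_distinct C CF (i := 0) (j := i.+1)); [lia | right; lia | rewrite B].
have [lt_1i|ge_1i] := ltnP 1 i.
  by apply: (nbcycle_distinct C CF (i := 1) (j := i)); [lia | left; lia | rewrite A].
have [f0 _ nb] := C; apply: (nb 0); first lia.
have L2 : L = 2 by lia.
by rewrite f0 L2.
Qed.

Lemma card_even_signings L f : 0 < L -> nbcycle H L f -> nbcycle_free H L.-1 ->
  2 * #|[set t : {ffun T * T -> bool} | ~~ parity (sym_sign t) L f]| =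
  #|{ffun T * T -> bool}|.
Proof.
move=> L_gt0 C CF; set c := upair (f 0) (f 1).
pose flip (t : {ffun T * T -> bool}) := [ffun z => if z == c then ~~ t z else t z].
have flipK : involutive flip.
  by move=> t; apply/ffunP => z; rewrite !ffunE; case: eqP => // _; rewrite negbK.
have parity_flip t : parity (sym_sign (flip t)) L f = ~~ parity (sym_sign t) L f.
  rewrite /parity big_ltn // [X in _ = ~~ X]big_ltn // /sym_sign ffunE -/c eqxx addNb.
  congr (~~ (_ (+) _)); apply: eq_big_nat => i /andP[i_gt0 lt_iL].
  by rewrite ffunE ifF //; apply/eqP; apply: (nbcycle_first_edge_once C CF); lia.
set X := [set t | ~~ parity (sym_sign t) L f].
have flipX : flip @: X = ~: X.
  apply/setP => t; rewrite !inE; apply/imsetP/idP.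
    by move=> [u]; rewrite inE => Hu ->; rewrite parity_flip negbK.
  by move=> Ht; exists (flip t); rewrite ?flipK // inE parity_flip.
have := cardsC X; rewrite -flipX card_imset; last exact: can_inj flipK.
by move=> <-; lia.
Qed.

Lemma exists_signing_fewer_cycles L :
  0 < L -> nbcycle_free H L.-1 -> 0 < ncycles H L ->
  exists s, (forall u v, s u v = s v u) /\ ncycles (lift2 H s) L < ncycles H L.
Proof.
move=> L_gt0 CF cyc.
pose B (t : {ffun T * T -> bool}) :=
  [set F : {ffun 'I_L.+1 -> T} | nbcycleb H F && ~~ parity (sym_sign t) L (fval F)].
suff [t lt_t] : exists t, 2 * #|B t| < ncycles H L.
  exists (sym_sign t); split; first exact: sym_signC.
  by apply: leq_ltn_trans lt_t; apply: ncycles_lift2_le; apply: sym_signC.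
apply: (exists_lt_of_sum (i0 := [ffun => false])); last first.
  suff -> : B [ffun => false] = [set F | nbcycleb H F] by rewrite -/(ncycles H L); lia.
  apply/setP => F; rewrite !inE /parity big1 ?andbT // => i _.
  by rewrite /sym_sign ffunE.
(* Count pairs (signing, cycle lifting to a cycle) in both orders. *)
transitivity (\sum_(F : {ffun 'I_L.+1 -> T}) \sum_(t : {ffun T * T -> bool})
                 2 * (nbcycleb H F && ~~ parity (sym_sign t) L (fval F))).
  rewrite exchange_big; apply: eq_bigr => t _.
  by rewrite -big_distrr sum_nat_bool.
rewrite /ncycles -sum_nat_bool big_distrr /=; apply: eq_bigr => F _.
case: (boolP (nbcycleb H F)) => [/nbcycleP C|_]; last by rewrite big1 ?muln0.
by rewrite -big_distrr /= sum_nat_bool card_even_signings // muln1.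
Qed.

End Signings.

Definition reduces_short_cycles (T : finType) (H : rel T) (s : T -> T -> bool) : Prop :=
  (forall u v, s u v = s v u) /\
  forall L, 0 < L -> nbcycle_free H L.-1 -> 0 < ncycles H L ->
    ncycles (lift2 H s) L < ncycles H L.

Lemma exists_reducing_signing (T : finType) (H : rel T) :
  exists s, reduces_short_cycles H s.
Proof.
have [[L [L_gt0 CF cyc]]|none] :=
  classic (exists L, [/\ 0 < L, nbcycle_free H L.-1 & 0 < ncycles H L]); last first.
  by exists (fun _ _ => false); split=> // L *; case: none; exists L.
have [s [s_sym fewer]] := exists_signing_fewer_cycles L_gt0 CF cyc.
exists s; split=> // L' L'_gt0 CF' cyc'; suff -> : L' = L by [].
have [f Cf] := (ncycles_gt0 H L).1 cyc; have [f' Cf'] := (ncycles_gt0 H L').1 cyc'.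
case: (ltngtP L' L) => // [lt_L'L|lt_LL']; first by case: (CF L' f') => //; lia.
by case: (CF' L f) => //; lia.
Qed.

Definition reducing_signing (T : finType) (H : rel T) : T -> T -> bool :=
  epsilon (inhabits (fun _ _ : T => false)) (reduces_short_cycles H).

Lemma reducing_signingP (T : finType) (H : rel T) :
  reduces_short_cycles H (reducing_signing H).
Proof. exact: epsilon_spec (exists_reducing_signing H). Qed.

Lemma nbcycle_freeS (T : finType) (H : rel T) L :
  nbcycle_free H L -> ncycles H L.+1 = 0 -> nbcycle_free H L.+1.
Proof.
move=> CF no_cyc m f m_gt0 le_m Cf; have [lt_m|] := ltnP m L.+1; first exact: (CF m f).
rewrite leq_eqVlt ltnNge le_m orbF => /eqP mE; subst m.
by have := (ncycles_gt0 H L.+1).2 (ex_intro _ f Cf); rewrite no_cyc.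
Qed.

(* Induction on the length: once no shorter cycles remain, each step strictly
   decreases the number of cycles of the next length, until none are left. *)
Lemma nbcycle_free_eventually (Tn : nat -> finType) (Hn : forall n, rel (Tn n)) :
  (forall n L, nbcycle_free (Hn n) L -> nbcycle_free (Hn n.+1) L) ->
  (forall n L, 0 < L -> nbcycle_free (Hn n) L.-1 -> 0 < ncycles (Hn n) L ->
     ncycles (Hn n.+1) L < ncycles (Hn n) L) ->
  forall L, exists M, forall n, M <= n -> nbcycle_free (Hn n) L.
Proof.
move=> free_step fewer.
have free_after L M : nbcycle_free (Hn M) L -> forall n, M <= n -> nbcycle_free (Hn n) L.
  by move=> CF n /subnK <-; elim: (n - M) => [|k IH] //; rewrite addSn; apply: free_step.
elim=> [|L [M freeM]]; first by exists 0 => n _ m f; lia.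
set c := ncycles (Hn M) L.+1.
have decr k : ncycles (Hn (k + M)) L.+1 + k <= c \/ nbcycle_free (Hn (k + M)) L.+1.
  elim: k => [|k [IH|IH]]; first by left; rewrite addn0.
  - have [no_cyc|cyc] := posnP (ncycles (Hn (k + M)) L.+1).
      right; rewrite addSn; apply: free_step; apply: nbcycle_freeS no_cyc.
      by apply: freeM; apply: leq_addl.
    left; have := fewer (k + M) L.+1 (ltn0Sn _) (freeM _ (leq_addl _ _)) cyc.
    by rewrite addSn; lia.
  - by right; rewrite addSn; apply: free_step.
exists (c.+1 + M); apply: free_after.
by case: (decr c.+1) => // ?; lia.
Qed.

(* [LV V n] has no [finType] structure, which counting cycles needs: [LVfin V n]
   is the same type built as a [finType], and [to_fin] is the identification. *)
Fixpoint LVfin (V : finType) (n : nat) : finType :=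
  match n with 0 => V | n'.+1 => (LVfin V n' * bool)%type end.

Fixpoint tower (V : finType) (e : rel V) (n : nat) : rel (LVfin V n) :=
  match n return rel (LVfin V n) with
  | 0 => e
  | n'.+1 => lift2 (@tower V e n') (reducing_signing (@tower V e n'))
  end.
Arguments tower {V} e n.

Lemma tower_nbcycle_free_eventually (V : finType) (e : rel V) L :
  exists M, forall n, M <= n -> nbcycle_free (tower e n) L.
Proof.
apply: nbcycle_free_eventually => n {}L; last exact: (reducing_signingP _).2.
exact/lift2_nbcycle_free/(reducing_signingP _).1.
Qed.

Fixpoint to_fin (V : finType) (n : nat) : LV V n -> LVfin V n :=
  match n return LV V n -> LVfin V n with
  | 0 => fun x => x
  | n'.+1 => fun x => (@to_fin V n' x.1, x.2)
  end.
Arguments to_fin {V} n.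

Lemma to_fin_inj (V : finType) n : injective (to_fin (V := V) n).
Proof. by elim: n => [|n IH] // [x1 x2] [y1 y2] [/IH -> ->]. Qed.

Definition lift_tower (V : finType) (e : rel V) (n : nat) : LV V n -> LV V n -> bool :=
  fun x y => tower e n (to_fin n x) (to_fin n y).
Arguments lift_tower {V} e n.

Definition tower_signing (V : finType) (e : rel V) (n : nat) : LV V n -> LV V n -> bool :=
  fun x y => reducing_signing (tower e n) (to_fin n x) (to_fin n y).
Arguments tower_signing {V} e n.

Lemma tower_signingC (V : finType) (e : rel V) n x y :
  tower_signing e n x y = tower_signing e n y x.
Proof. exact: (reducing_signingP _).1. Qed.

Lemma lift_tower_is_2lift (V : finType) (e : rel V) n :
  is_2lift (lift_tower e n) (lift_tower e n.+1).
Proof. exact (lift2_is_2lift (lift_tower e n) (@tower_signingC V e n)). Qed.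

Lemma lift_tower_covering (V : finType) (e : rel V) n : symmetric e ->
  exists lst, covering e (lift_tower e n) (@proj V n) lst.
Proof.
move=> e_sym; elim: n => [|n [lst cov]].
  by exists (fun _ u => u); split=> // x y z _ _ /= ->.
by eexists; apply: (lift2_covering (@tower_signingC V e n)) cov.
Qed.

Lemma nbcycle_free_comp (X Y : Type) (H : Y -> Y -> bool) (g : X -> Y) L :
  injective g -> nbcycle_free H L -> nbcycle_free (fun x y => H (g x) (g y)) L.
Proof.
move=> g_inj CF m f m_gt0 le_m [f0 adj nb]; apply: (CF m (g \o f)) => //.
by split=> [|i lt_i|i lt_i /g_inj]; rewrite /= ?f0; [| apply: adj | apply: nb].
Qed.

Theorem proposition4p12 (V : finType) (e : rel V) :
  simple_graph e ->
  exists G : forall n, LV V n -> LV V n -> bool,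
    G 0 = e /\
    (forall n, is_2lift (G n) (G n.+1)) /\
    (forall (v : V) (vs : forall n, LV V n),
       (forall n, proj (vs n) = v) ->
       local_conv G vs (tree_adj e v) [::]).
Proof.
move=> [e_sym _]; exists (lift_tower e); split=> //; split=> [n|v vs vsE h].
  exact: lift_tower_is_2lift.
have [M freeM] := tower_nbcycle_free_eventually e (h + h).+2.
exists M => n le_Mn; have [lst cov] := lift_tower_covering n e_sym.
rewrite -(vsE n); apply: covering_ball_iso cov _ _.
exact (nbcycle_free_comp (@to_fin_inj V n) (freeM n le_Mn)).
Qed.
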